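(* For all integers $d\ge2$ and $k\ge1$, if $T$ is chosen uniformly at random from $\mathcal{C}_k^{(d)}$, then the probability that at least $d-1$ of the $d$ children of the root of $T$ are leaves is at least $1/e$.
   Context: A $d$-Catalan tree is a rooted planar tree in which each vertex has $0$ or $d$ children; $\mathcal{C}_k^{(d)}$ is the set of such trees with $k$ internal (non-leaf) vertices. *)

From Stdlib Require Import Reals Arith List Bool.
Import ListNotations.
Open Scope bool_scope.

(** Rooted planar (ordered) trees: a vertex with its ordered list of children. *)
Inductive tree : Type := Node : list tree -> tree.

Definition is_leaf (t : tree) : bool :=
  match t with Node [] => true | _ => false end.

Fixpoint internal (t : tree) : nat :=
  match t with
  | Node [] => 0
  | Node l => 1 + (fix sum (l : list tree) : nat :=
                     match l with [] => 0 | c :: r => internal c + sum r end) l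
  end.

Fixpoint is_dcatalan (d : nat) (t : tree) : bool :=
  match t with
  | Node l => ((length l =? 0) || (length l =? d)) &&
              (fix all (l : list tree) : bool :=
                 match l with [] => true | c :: r => is_dcatalan d c && all r end) l
  end.

Definition in_C (d k : nat) (t : tree) : Prop :=
  is_dcatalan d t = true /\ internal t = k.

Definition root_good (d : nat) (t : tree) : bool :=
  match t with Node l => d - 1 <=? length (filter is_leaf l) end.

(* A tree of C_k^(d) is a root carrying a forest of d trees with k - 1 internal
   vertices.  Forests of m trees with K internal vertices are counted by
   N_K(m) = m / (dK + m) * binom(dK + m, K), hence
   (d - 1) m N_K(m + 1) <= d (m + 1) N_K(m).  For k >= 2 the root is good iff
   exactly one of its subtrees is internal, which happens in d N_{k-2}(d) = d N_{k-1}(1)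
   of the N_{k-1}(d) cases, and chaining the ratio bound from m = 1 to m = d gives
   N_{k-1}(d) <= (d / (d - 1))^(d-1) d N_{k-1}(1) <= e d N_{k-1}(1). *)

From Stdlib Require Import Reals List Lia Lra Permutation Bool.
Import ListNotations.

Definition leaf : tree := Node [].

Definition forest_internal (f : list tree) : nat := list_sum (map internal f).

Lemma internal_Node l :
  internal (Node l) = match l with [] => 0 | _ => S (forest_internal l) end.
Proof.
  destruct l as [|c r]; [reflexivity|].
  simpl; unfold forest_internal; simpl; do 2 f_equal.
  induction r; simpl; congruence.
Qed.

Lemma is_dcatalan_Node d l :
  is_dcatalan d (Node l) = ((length l =? 0) || (length l =? d)) && forallb (is_dcatalan d) l.
Proof. reflexivity. Qed.

Lemma forest_internal_app f g :
  forest_internal (f ++ g) = forest_internal f + forest_internal g.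
Proof. unfold forest_internal. now rewrite map_app, list_sum_app. Qed.

Lemma forest_internal_eq0 f : forest_internal f = 0 <-> forallb is_leaf f = true.
Proof.
  induction f as [|[[|c r]] f IH]; cbn -[internal]; [tauto| |].
  - exact IH.
  - rewrite internal_Node. split; [lia|discriminate].
Qed.

Definition is_forest d K m (f : list tree) : Prop :=
  length f = m /\ forallb (is_dcatalan d) f = true /\ forest_internal f = K.

(* Either the first tree is a leaf, or it is a node whose [d] children, put in
   front of the remaining trees, form a forest with one internal vertex less. *)
Fixpoint forests (d K : nat) : nat -> list (list tree) :=
  match K with
  | 0 => fun m => [repeat leaf m]
  | S K' => fix forests_K m := match m with
            | 0 => []
            | S m' => map (cons leaf) (forests_K m') ++
                      map (fun f => Node (firstn d f) :: skipn d f) (forests d K' (m' + d))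
            end
  end.

Lemma forests_S d K m : forests d (S K) (S m) =
  map (cons leaf) (forests d (S K) m) ++
  map (fun f => Node (firstn d f) :: skipn d f) (forests d K (m + d)).
Proof. reflexivity. Qed.

Lemma is_forest_leaves d m f : is_forest d 0 m f <-> f = repeat leaf m.
Proof.
  unfold is_forest. rewrite forest_internal_eq0. split.
  - intros (<- & _ & Hleaf). induction f as [|[[|c r]] f IH]; try discriminate; [reflexivity|].
    simpl; f_equal; auto.
  - intros ->. rewrite repeat_length. induction m as [|m IH]; [auto|]. simpl. tauto.
Qed.

Lemma is_forest_S_S d K m f : 1 <= d ->
  is_forest d (S K) (S m) f <->
  (exists f', f = leaf :: f' /\ is_forest d (S K) m f') \/
  (exists g, f = Node (firstn d g) :: skipn d g /\ is_forest d K (m + d) g).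
Proof.
  intro hd. unfold is_forest. split.
  - intros (Hlen & Hcat & Hint). destruct f as [|[l] f']; [discriminate|].
    cbn [length forallb] in Hlen, Hcat; apply andb_prop in Hcat as [Hl Hf'].
    change (forest_internal (Node l :: f')) with (internal (Node l) + forest_internal f')
      in Hint; rewrite internal_Node in Hint.
    destruct l as [|c r] eqn:El; [left; exists f'; intuition lia|right].
    rewrite is_dcatalan_Node in Hl; apply andb_prop in Hl as [Hdeg Hl].
    assert (Hd : length l = d) by (subst l; apply orb_prop in Hdeg as [H|H];
      [discriminate|now apply Nat.eqb_eq]).
    rewrite <- El in *; exists (l ++ f').
    subst d; rewrite firstn_app, skipn_app, Nat.sub_diag, firstn_all, skipn_all, firstn_O,
      skipn_O, app_nil_r.
    rewrite length_app, forallb_app, Hl, Hf', forest_internal_app. intuition lia.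
  - intros [(f' & -> & Hlen & Hcat & Hint)|(g & -> & Hlen & Hcat & Hint)];
      [cbn; intuition lia|].
    assert (Hd : length (firstn d g) = d) by (rewrite length_firstn; lia).
    rewrite <- (firstn_skipn d g), forallb_app in Hcat.
    rewrite <- (firstn_skipn d g), forest_internal_app in Hint.
    apply andb_prop in Hcat as [Hl Hf'].
    change (forest_internal (Node (firstn d g) :: skipn d g))
      with (internal (Node (firstn d g)) + forest_internal (skipn d g)).
    cbn [length forallb]. rewrite is_dcatalan_Node, internal_Node, Hd, Nat.eqb_refl, Hl, Hf',
      orb_true_r, length_skipn.
    destruct (firstn d g); [cbn in Hd; lia|]. intuition lia.
Qed.

Lemma In_forests d K m f : 1 <= d -> In f (forests d K m) <-> is_forest d K m f.
Proof.
  intro hd. revert m f; induction K as [|K IHK]; intros m f.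
  - rewrite is_forest_leaves. cbn. intuition.
  - induction m as [|m IHm] in f |- *.
    + cbn. split; [tauto|]. destruct f; [now intros (_ & _ & H)|now intros [H _]].
    + rewrite forests_S, in_app_iff, !in_map_iff, is_forest_S_S by exact hd.
      setoid_rewrite IHm; setoid_rewrite IHK.
      split; intros [(g & Hg & Hf)|(g & Hg & Hf)]; [left|right|left|right]; exists g; auto.
Qed.

Lemma NoDup_forests d K m : 1 <= d -> NoDup (forests d K m).
Proof.
  intro hd. revert m; induction K as [|K IHK]; intro m.
  - repeat constructor; auto.
  - induction m as [|m IHm]; [constructor|]. rewrite forests_S. apply NoDup_app.
    + apply FinFun.Injective_map_NoDup; [intros f g H; now injection H|exact IHm].
    + apply FinFun.Injective_map_NoDup; [|apply IHK].
      intros f g H; injection H as Hfirst Hskip.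
      now rewrite <- (firstn_skipn d f), <- (firstn_skipn d g), Hfirst, Hskip.
    + intros f (f' & <- & _)%in_map_iff (g & Hg & Hin)%in_map_iff.
      apply In_forests in Hin as [Hlen _]; [|exact hd].
      injection Hg as Hleaf _.
      destruct g as [|t g]; [cbn in Hlen; lia|]. destruct d; [lia|discriminate].
Qed.

Definition forest_count d K m : nat := length (forests d K m).

Lemma forest_count_leaves d m : forest_count d 0 m = 1.
Proof. reflexivity. Qed.

Lemma forest_count_nil d K : forest_count d (S K) 0 = 0.
Proof. reflexivity. Qed.

Lemma forest_count_S_S d K m :
  forest_count d (S K) (S m) = forest_count d (S K) m + forest_count d K (m + d).
Proof. unfold forest_count. now rewrite forests_S, length_app, !length_map. Qed.

Fixpoint binom (n k : nat) : nat :=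
  match n, k with
  | _, 0 => 1
  | 0, S _ => 0
  | S n', S k' => binom n' k' + binom n' k
  end.

Lemma binom_0_r n : binom n 0 = 1.
Proof. now destruct n. Qed.

Lemma binom_S_S n k : binom (S n) (S k) = binom n k + binom n (S k).
Proof. reflexivity. Qed.

Lemma binom_absorb n k : S k * binom (S n) (S k) = S n * binom n k.
Proof.
  induction n as [|n IHn] in k |- *.
  - destruct k; simpl; lia.
  - rewrite binom_S_S. destruct k as [|k].
    + rewrite !binom_0_r. specialize (IHn 0). rewrite binom_0_r in IHn. lia.
    + pose proof (IHn k). pose proof (IHn (S k)).
      pose proof (f_equal (Nat.mul (S n)) (binom_S_S n k)). nia.
Qed.

Lemma binom_succ_r_mul n k : S k * binom n (S k) = (n - k) * binom n k.
Proof.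
  pose proof (binom_absorb n k) as H. rewrite binom_S_S in H.
  rewrite Nat.mul_sub_distr_r. lia.
Qed.

Lemma binom_succ_l_mul n k : (S n - k) * binom (S n) k = S n * binom n k.
Proof.
  destruct k as [|k]; [rewrite !binom_0_r; lia|].
  pose proof (binom_absorb n k) as H. rewrite binom_S_S in *.
  rewrite Nat.mul_sub_distr_r. nia.
Qed.

Lemma forest_count_closed d K m : 1 <= d ->
  (d * K + m) * forest_count d K m = m * binom (d * K + m) K.
Proof.
  intro hd. induction K as [|K IHK] in m |- *.
  - rewrite forest_count_leaves, binom_0_r. lia.
  - induction m as [|m IHm]; [rewrite forest_count_nil; lia|].
    rewrite forest_count_S_S.
    set (D := d * S K + m) in IHm.
    replace (d * S K + S m) with (S D) by lia.
    pose proof (IHK (m + d)) as IHd. replace (d * K + (m + d)) with D in IHd by lia.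
    pose proof (binom_succ_r_mul D K) as Hsucc.
    rewrite binom_S_S.
    apply (Nat.mul_cancel_l _ _ D); [lia|].
    assert (HD : D = d * K + d + m) by lia. clearbody D.
    nia.
Qed.

Lemma forest_count_succ_le d K m : 1 <= d ->
  (d - 1) * m * forest_count d K (S m) <= d * S m * forest_count d K m.
Proof.
  intro hd. set (D := d * K + m).
  pose proof (forest_count_closed d K m hd) as Hm.
  pose proof (forest_count_closed d K (S m) hd) as HSm.
  replace (d * K + S m) with (S D) in HSm by lia. fold D in Hm.
  pose proof (binom_succ_l_mul D K) as Hbinom.
  destruct d as [|d']; [lia|]. replace (S d' - 1) with d' by lia.
  replace (S D - K) with (S (d' * K + m)) in Hbinom by (unfold D; lia).
  set (E := S (d' * K + m)) in Hbinom.
  assert (HE : d' * D <= S d' * E) by (unfold E, D; nia).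
  set (N0 := forest_count (S d') K m) in *; set (N1 := forest_count (S d') K (S m)) in *.
  assert (Hratio : m * E * N1 = S m * D * N0).
  { apply (Nat.mul_cancel_l _ _ (S D)); [lia|].
    replace (S D * (m * E * N1)) with (m * E * (S D * N1)) by ring.
    rewrite HSm. replace (m * E * (S m * binom (S D) K))
      with (m * S m * (E * binom (S D) K)) by ring.
    rewrite Hbinom. replace (S D * (S m * D * N0)) with (S D * S m * (D * N0)) by ring.
    rewrite Hm. ring. }
  apply (Nat.mul_le_mono_pos_l _ _ E); [unfold E; lia|].
  replace (E * (d' * m * N1)) with (d' * (m * E * N1)) by ring.
  rewrite Hratio.
  replace (d' * (S m * D * N0)) with (S m * N0 * (d' * D)) by ring.
  replace (E * (S d' * S m * N0)) with (S m * N0 * (S d' * E)) by ring.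
  now apply Nat.mul_le_mono_l.
Qed.

Lemma pow_mul_le_of_succ_le (a b : nat) (x : nat -> nat) :
  (forall m, a * m * x (S m) <= b * S m * x m) ->
  forall j, (a ^ j * x (S j) <= b ^ j * S j * x 1).
Proof.
  intros Hstep j. induction j as [|j IHj]; [cbn; lia|].
  apply (Nat.mul_le_mono_pos_l _ _ (S j)); [lia|].
  apply Nat.le_trans with (a ^ j * (b * S (S j) * x (S j))).
  { replace (S j * (a ^ S j * x (S (S j)))) with (a ^ j * (a * S j * x (S (S j))))
      by (cbn; ring).
    apply Nat.mul_le_mono_l, Hstep. }
  replace (a ^ j * (b * S (S j) * x (S j))) with (b * S (S j) * (a ^ j * x (S j)))
    by ring.
  apply Nat.le_trans with (b * S (S j) * (b ^ j * S j * x 1));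
    [now apply Nat.mul_le_mono_l|].
  apply Nat.eq_le_incl. cbn [Nat.pow]. ring.
Qed.

Lemma length_filter_map {A B} (p : B -> bool) (h : A -> B) (l : list A) :
  length (filter p (map h l)) = length (filter (fun x => p (h x)) l).
Proof. now rewrite filter_map_swap, length_map. Qed.

Lemma forests_leaf_suffix_count d K j m : 1 <= d ->
  length (filter (fun f => forallb is_leaf (skipn j f)) (forests d K (j + m))) =
  forest_count d K j.
Proof.
  intro hd. induction K as [|K IHK] in j |- *.
  - cbn [forests filter].
    replace (skipn j (repeat leaf (j + m))) with (repeat leaf m) by (induction j; auto).
    replace (forallb is_leaf (repeat leaf m)) with true by (induction m; auto).
    reflexivity.
  - induction j as [|j IHj].
    + rewrite forest_count_nil, (filter_ext_in _ (fun _ => false)), filter_false; [reflexivity|].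
      intros f Hf%In_forests; [|exact hd]. destruct Hf as (_ & _ & Hint).
      rewrite skipn_O. destruct (forallb is_leaf f) eqn:Hleaf; [|reflexivity].
      apply forest_internal_eq0 in Hleaf. lia.
    + cbn [Nat.add]. rewrite forests_S, forest_count_S_S, filter_app, length_app,
        !length_filter_map. cbn [skipn]. rewrite IHj. f_equal.
      rewrite (filter_ext _ (fun f => forallb is_leaf (skipn (j + d) f))).
      * replace (j + m + d) with (j + d + m) by lia. apply IHK.
      * intro f. now rewrite skipn_skipn, Nat.add_comm.
Qed.

Definition almost_all_leaves m (f : list tree) : bool :=
  m - 1 <=? length (filter is_leaf f).

Lemma almost_all_leaves_cons_leaf m f :
  almost_all_leaves (S m) (leaf :: f) = almost_all_leaves m f.
Proof. unfold almost_all_leaves; cbn. apply eq_true_iff_eq. rewrite !Nat.leb_le. lia. Qed.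

Lemma almost_all_leaves_cons_node m l f : l <> [] -> length f = m ->
  almost_all_leaves (S m) (Node l :: f) = forallb is_leaf f.
Proof.
  intros Hl <-. unfold almost_all_leaves. destruct l as [|c r]; [easy|]. cbn.
  rewrite Nat.sub_0_r. apply eq_true_iff_eq. rewrite Nat.leb_le. split.
  - intro Hle. apply filter_length_forallb. pose proof (filter_length_le is_leaf f). lia.
  - intro Hleaf. now rewrite (forallb_filter_id _ _ Hleaf).
Qed.

Lemma almost_all_leaves_count d K m : 1 <= d ->
  length (filter (almost_all_leaves m) (forests d (S K) m)) = m * forest_count d K d.
Proof.
  intro hd. induction m as [|m IHm]; [reflexivity|].
  rewrite forests_S, filter_app, length_app, !length_filter_map.
  rewrite (filter_ext _ _ (almost_all_leaves_cons_leaf m)), IHm.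
  rewrite (filter_ext_in _ (fun f => forallb is_leaf (skipn d f))).
  - rewrite (Nat.add_comm m d), forests_leaf_suffix_count by exact hd. lia.
  - intros f Hf%In_forests; [|exact hd]. destruct Hf as (Hlen & _).
    apply almost_all_leaves_cons_node; [|rewrite length_skipn; lia].
    intros Hnil%(f_equal (@length tree)). rewrite length_firstn in Hnil. cbn in Hnil. lia.
Qed.

Lemma forest_count_pos d K m : 1 <= d -> 0 < forest_count d K (S m).
Proof.
  intro hd. induction K as [|K IHK] in m |- *; [rewrite forest_count_leaves; lia|].
  rewrite forest_count_S_S. replace (m + d) with (S (m + d - 1)) by lia.
  specialize (IHK (m + d - 1)). lia.
Qed.

Definition dcatalan_trees d k : list tree := map Node (forests d (k - 1) d).

Lemma In_dcatalan_trees d k t : 1 <= d -> 1 <= k ->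
  In t (dcatalan_trees d k) <-> in_C d k t.
Proof.
  intros hd hk. unfold dcatalan_trees, in_C. rewrite in_map_iff. split.
  - intros (l & <- & (Hlen & Hcat & Hint)%In_forests); [|exact hd].
    rewrite is_dcatalan_Node, Hlen, Nat.eqb_refl, orb_true_r, Hcat, internal_Node.
    destruct l; [cbn in Hlen; lia|]. split; [reflexivity|lia].
  - intros [Hcat Hint]. destruct t as [l]. exists l. split; [reflexivity|].
    apply In_forests; [exact hd|].
    rewrite is_dcatalan_Node in Hcat; apply andb_prop in Hcat as [Hdeg Hcat].
    rewrite internal_Node in Hint. destruct l as [|c r]; [lia|].
    apply orb_prop in Hdeg as [Hdeg|Hdeg]; [discriminate|].
    apply Nat.eqb_eq in Hdeg. repeat split; [exact Hdeg|exact Hcat|lia].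
Qed.

Lemma NoDup_dcatalan_trees d k : 1 <= d -> NoDup (dcatalan_trees d k).
Proof.
  intro hd. apply FinFun.Injective_map_NoDup; [now intros l l' [=]|exact (NoDup_forests _ _ _ hd)].
Qed.

Lemma NoDup_filter_length_eq {A} (p : A -> bool) (s t : list A) :
  NoDup s -> NoDup t -> (forall x, In x s <-> In x t) ->
  length (filter p s) = length (filter p t).
Proof.
  intros Hs Ht Hst. apply Permutation_length, NoDup_Permutation; try apply NoDup_filter; auto.
  intro x. rewrite !filter_In, Hst. tauto.
Qed.

Open Scope R_scope.

Lemma exp_pow x n : exp x ^ n = exp (INR n * x).
Proof.
  induction n as [|n IHn]; [now rewrite Rmult_0_l, exp_0|].
  rewrite S_INR. cbn [pow]. rewrite IHn, <- exp_plus. f_equal. ring.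
Qed.

Lemma succ_pow_le_exp_mul_pow n : INR (S n) ^ n <= exp 1 * INR n ^ n.
Proof.
  destruct n as [|n']; [cbn; pose proof (exp_ineq1_le 1); lra|].
  set (n := S n'). assert (Hn : 0 < INR n) by (apply lt_0_INR; lia).
  replace (INR (S n)) with (INR n * (1 + / INR n)) by (rewrite S_INR; field; lra).
  rewrite Rpow_mult_distr, Rmult_comm. apply Rmult_le_compat_r; [apply pow_le; lra|].
  replace (exp 1) with (exp (/ INR n) ^ n).
  - apply pow_incr. split; [pose proof (Rinv_0_lt_compat _ Hn); lra|apply exp_ineq1_le].
  - rewrite exp_pow. f_equal. field. lra.
Qed.

Lemma forest_count_le_exp_almost_all_leaves d K : (1 <= d)%nat ->
  INR (forest_count d K d) <= exp 1 * INR (length (filter (almost_all_leaves d) (forests d K d))).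
Proof.
  intro hd. pose proof (exp_ineq1_le 1) as He. destruct K as [|K].
  - assert (Hall : almost_all_leaves d (repeat leaf d) = true).
    { unfold almost_all_leaves. rewrite forallb_filter_id, repeat_length by (clear; now induction d).
      apply Nat.leb_le; lia. }
    cbn [forests filter]. rewrite Hall, forest_count_leaves. cbn. lra.
  - rewrite almost_all_leaves_count, mult_INR by exact hd.
    set (N := INR (forest_count d (S K) d)); set (G := INR d * INR (forest_count d K d)).
    set (a := INR (d - 1) ^ (d - 1)); set (b := INR d ^ (d - 1)).
    assert (Hchain : a * N <= b * G).
    { pose proof (pow_mul_le_of_succ_le (d - 1) d (forest_count d (S K))
                    (fun m => forest_count_succ_le d (S K) m hd) (d - 1)) as Hchain.
      rewrite (forest_count_S_S d K 0), forest_count_nil in Hchain; cbn [Nat.add] in Hchain.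
      replace (S (d - 1)) with d in Hchain by lia.
      apply le_INR in Hchain. rewrite !mult_INR, !pow_INR in Hchain.
      unfold a, b, G, N. lra. }
    assert (Hexp : b <= exp 1 * a).
    { unfold a, b. replace d with (S (d - 1)) at 1 by lia. apply succ_pow_le_exp_mul_pow. }
    assert (Ha : 0 < a).
    { unfold a. destruct (d - 1)%nat as [|n]; [cbn; lra|]. apply pow_lt, lt_0_INR. lia. }
    assert (HG : 0 <= G) by (apply Rmult_le_pos; apply pos_INR).
    apply (Rmult_le_reg_l a); [exact Ha|]. nra.
Qed.

Lemma Rinv_le_div_of_le_mul c x y : 0 < c -> 0 < y -> y <= c * x -> / c <= x / y.
Proof.
  intros Hc Hy Hle. apply (Rmult_le_reg_r y); [exact Hy|]. unfold Rdiv.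
  rewrite Rmult_assoc, Rinv_l, Rmult_1_r by lra.
  apply (Rmult_le_reg_l c); [exact Hc|].
  rewrite <- Rmult_assoc, Rinv_r, Rmult_1_l by lra. exact Hle.
Qed.

Theorem lemma5p2 (d k : nat) (hd : (2 <= d)%nat) (hk : (1 <= k)%nat) :
  (exists s : list tree, NoDup s /\ forall t, In t s <-> in_C d k t) /\
  (forall s : list tree, NoDup s -> (forall t, In t s <-> in_C d k t) ->
     / exp 1 <= INR (length (filter (root_good d) s)) / INR (length s)).
Proof.
  assert (hd1 : (1 <= d)%nat) by lia.
  split.
  - exists (dcatalan_trees d k). split; [now apply NoDup_dcatalan_trees|].
    intro t. now apply In_dcatalan_trees.
  - intros s Hs Hmem.
    assert (Hsame : forall t, In t s <-> In t (dcatalan_trees d k)).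
    { intro t. rewrite Hmem, In_dcatalan_trees by assumption. reflexivity. }
    pose proof (NoDup_filter_length_eq (fun _ => true) _ _ Hs (NoDup_dcatalan_trees d k hd1) Hsame)
      as Htotal.
    rewrite !filter_true in Htotal.
    rewrite Htotal, (NoDup_filter_length_eq _ _ _ Hs (NoDup_dcatalan_trees d k hd1) Hsame).
    unfold dcatalan_trees. rewrite length_filter_map, length_map.
    change (fun l => root_good d (Node l)) with (almost_all_leaves d).
    pose proof (forest_count_le_exp_almost_all_leaves d (k - 1) hd1) as Hbound.
    assert (Hpos : 0 < INR (forest_count d (k - 1) d)).
    { apply lt_0_INR. destruct d as [|d']; [lia|]. now apply forest_count_pos. }
    exact (Rinv_le_div_of_le_mul _ _ _ (exp_pos 1) Hpos Hbound).
Qed.
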